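(* Let $d,n\ge 1$ and let $\mathfrak{m}(d)=\{m_{j_1,\dots,j_{d+1}}\}_{j_1,\dots,j_{d+1}=1}^n$ be a real multi-dimensional array, not identically zero. Let $X_1,\dots,X_d$ be random $n\times n$ real matrices (entries possibly dependent), and write $X^{(k)}_{ij}$ for the $(i,j)$ entry of $X_k$. Let $f\in\mathcal{B}_c$ and suppose $$P\big(|X^{(k)}_{ij}|\ge u\big)\le f(u)\quad\text{for all } u\ge 0 \text{ and all } i,j\in\{1,\dots,n\},\ k\in\{1,\dots,d\}.$$ Then for all $t\ge 0$, $$P\Big(\big|\operatorname{Tr}\big(\mathfrak{M}_{\mathfrak{m}(d)}(X_1,\dots,X_d)\big)\big|\ge t\Big)\le d n^2\, f\!\left(\frac{t^{1/d}}{\|\mathfrak{m}(d)\|_1^{1/d}}\right).$$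
   Context: $\mathcal{B}_c$ is the set of functions $f:[0,\infty)\to(0,\infty)$ that are continuous, strictly decreasing, satisfy $f(0)\ge 1$ and $\lim_{u\to\infty}f(u)=0$. For $n\times n$ real matrices $Y_1,\dots,Y_d$ with entries $y^{(k)}_{ij}$, the $d$-linear Schur multiplier is $\mathfrak{M}_{\mathfrak{m}(d)}(Y_1,\dots,Y_d)=\sum_{j_1,\dots,j_{d+1}=1}^n m_{j_1,\dots,j_{d+1}}\, y^{(1)}_{j_1,j_2}\cdots y^{(d)}_{j_d,j_{d+1}}\,E_{j_1,j_{d+1}}$, where $E_{i,j}$ is the elementary matrix with a $1$ in position $(i,j)$ and zeros elsewhere. $\|\mathfrak{m}(d)\|_1=\sum_{j_1,\dots,j_{d+1}}|m_{j_1,\dots,j_{d+1}}|$. *)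

From HB Require Import structures.
From mathcomp Require Import all_boot all_order all_algebra.
From mathcomp Require Import all_classical all_reals all_analysis.
Set Implicit Arguments. Unset Strict Implicit. Unset Printing Implicit Defensive.
Import Order.TTheory GRing.Theory Num.Theory.
Import numFieldNormedType.Exports.
Local Open Scope classical_set_scope.
Local Open Scope ring_scope.

Definition Bc (R : realType) (f : R -> R) : Prop :=
  [/\ forall u, 0 <= u -> 0 < f u,
      {within `[0, +oo[, continuous f},
      forall u v, 0 <= u -> u < v -> f v < f u,
      1 <= f 0 &
      f x @[x --> +oo] --> 0].

(* A d-linear array m(d) indexed by (j_1,...,j_{d+1}) in {1..n}^{d+1},
   represented as a function on {ffun 'I_d.+1 -> 'I_n} (index k = j_{k+1}). *)
Definition schur_mult (R : realType) (n d : nat)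
  (m : {ffun 'I_d.+1 -> 'I_n} -> R) (Y : 'I_d -> 'M[R]_n) : 'M[R]_n :=
  \sum_(j : {ffun 'I_d.+1 -> 'I_n})
     (m j * \prod_(k < d) Y k (j (widen_ord (leqnSn d) k)) (j (lift ord0 k)))
       *: delta_mx (j ord0) (j ord_max).

Definition array_norm1 (R : realType) (n d : nat)
  (m : {ffun 'I_d.+1 -> 'I_n} -> R) : R :=
  \sum_(j : {ffun 'I_d.+1 -> 'I_n}) `|m j|.

(* The trace of the Schur multiplier is a sum, over index tuples j, of m_j
   times a product of d entries, so |Tr| <= ||m||_1 * M^d when every entry is
   bounded by M.  Hence |Tr| >= t = ||m||_1 * s^d forces some entry to have
   modulus at least s = (t / ||m||_1)^(1/d), and the union bound over the
   d n^2 entries together with the tail hypothesis at level s gives the claim. *)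
From HB Require Import structures.
From mathcomp Require Import all_boot all_order all_algebra finmap.
From mathcomp Require Import all_classical all_reals all_analysis.
Import Order.TTheory GRing.Theory Num.Theory.
Import numFieldNormedType.Exports.
Local Open Scope classical_set_scope.
Local Open Scope ring_scope.

Lemma fsbig_setT (R : Type) (idx : R) (op : Monoid.com_law idx) (I : finType)
    (F : I -> R) :
  \big[op/idx]_(i \in [set: I]) F i = \big[op/idx]_(i : I) F i.
Proof.
rewrite (fsbigTE [fset i | i : I]%fset) => [|i]; last by rewrite in_imfset.
by rewrite big_imfset //= big_enum.
Qed.

Section measure_facts.
Context (R : realType) (dT : measure_display) (T : measurableType dT).

Lemma content_le_sum_cover (mu : {content set T -> \bar R}) (I : finType)
    (A : set T) (E : I -> set T) :
  measurable A -> (forall i, measurable (E i)) ->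
  A `<=` \bigcup_i E i -> (mu A <= \sum_(i : I) mu (E i))%E.
Proof.
move=> mA mE AE; rewrite -fsbig_setT.
by apply: content_sub_fsum => //; exact: finite_finset.
Qed.

Lemma measurable_norm_ge (g : T -> R) (u : R) :
  measurable_fun setT g -> measurable [set w | u <= `|g w|].
Proof.
move=> mg; rewrite -preimage_itvcy -[X in measurable X]setTI.
by apply: measurableT_comp => //; exact: measurable_realfun.normr_measurable.
Qed.

End measure_facts.

Lemma mxtrace_delta (R : pzRingType) n (a b : 'I_n) :
  \tr (delta_mx a b : 'M[R]_n) = (a == b)%:R.
Proof.
rewrite /mxtrace (bigD1 a) //= big1 => [|i ia]; last by rewrite mxE (negbTE ia).
by rewrite mxE eqxx addr0 /= eq_sym.
Qed.

Section schur_trace.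
Context {R : realType} {n d : nat} {m : {ffun 'I_d.+1 -> 'I_n} -> R}.

Lemma mxtrace_schur_mult (Y : 'I_d -> 'M[R]_n) :
  \tr (schur_mult m Y) =
  \sum_(j : {ffun 'I_d.+1 -> 'I_n}) (j ord0 == j ord_max)%:R *
     (m j * \prod_(k < d) Y k (j (widen_ord (leqnSn d) k)) (j (lift ord0 k))).
Proof.
rewrite /schur_mult raddf_sum; apply: eq_bigr => j _.
by rewrite /= mxtraceZ mxtrace_delta mulrC.
Qed.

Lemma norm_mxtrace_schur_mult_le {Y : 'I_d -> 'M[R]_n} {M : R} :
  0 <= M -> (forall k i j, `|Y k i j| <= M) ->
  `|\tr (schur_mult m Y)| <= array_norm1 m * M ^+ d.
Proof.
move=> M0 YM; rewrite mxtrace_schur_mult /array_norm1 mulr_suml.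
apply: (le_trans (ler_norm_sum _ _ _)); apply: ler_sum => j _.
rewrite normrM; apply: (@le_trans _ _ `|m j * \prod_(k < d) _|).
  by apply: ler_piMl => //; case: (_ == _); rewrite ?normr0 ?normr1.
rewrite normrM ler_wpM2l // normr_prod -[d in M ^+ d]card_ord -prodr_const.
by apply: ler_prod => k _; rewrite normr_ge0 YM.
Qed.

Lemma array_norm1_gt0 : (exists j, m j != 0) -> 0 < array_norm1 m.
Proof.
case=> j mj0; apply: (@lt_le_trans _ _ `|m j|); first by rewrite normr_gt0.
by rewrite /array_norm1 (bigD1 j) //= lerDl sumr_ge0.
Qed.

Lemma mxtrace_schur_mult_large_entry {Y : 'I_d -> 'M[R]_n} {s : R} :
  (0 < d)%N -> (0 < n)%N -> 0 < array_norm1 m ->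
  array_norm1 m * s ^+ d <= `|\tr (schur_mult m Y)| ->
  exists k i j, s <= `|Y k i j|.
Proof.
move=> d_gt0 n_gt0 m_gt0 trs.
pose k0 := Ordinal d_gt0; pose i0 := Ordinal n_gt0.
have [s_le0|s_gt0] := leP s 0.
  by exists k0, i0, i0; exact: le_trans s_le0 _.
pose M := \big[Order.max/0]_(x : 'I_d * 'I_n * 'I_n) `|Y x.1.1 x.1.2 x.2|.
have M0 : 0 <= M by exact: bigmax_ge_id.
have YM k i j : `|Y k i j| <= M.
  exact: (le_bigmax _ (fun x : 'I_d * 'I_n * 'I_n => `|Y x.1.1 x.1.2 x.2|) (k, i, j)).
have : s ^+ d <= M ^+ d.
  rewrite -(ler_pM2l m_gt0).
  exact: le_trans trs (norm_mxtrace_schur_mult_le M0 YM).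
rewrite (ler_pXn2r d_gt0) ?nnegrE ?(ltW s_gt0) //.
case/bigmax_geP => [/(lt_le_trans s_gt0)|[[[k i] j] _ sY]]; last by exists k, i, j.
by rewrite ltxx.
Qed.

Lemma measurable_mxtrace_schur_mult {dT : measure_display} {T : measurableType dT}
    {X : 'I_d -> T -> 'M[R]_n} :
  (forall k i j, measurable_fun setT (fun w => X k w i j)) ->
  measurable_fun setT (fun w => \tr (schur_mult m (fun k => X k w))).
Proof.
move=> mX; under eq_fun do rewrite mxtrace_schur_mult.
apply: measurable_sum => j; apply: measurable_realfun.measurable_funM.
  exact: measurable_cst.
apply: measurable_realfun.measurable_funM; first exact: measurable_cst.
by apply: measurable_prod => k _; exact: mX.
Qed.

End schur_trace.

Lemma powR_natrVK (R : realType) (x : R) (d : nat) :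
  (0 < d)%N -> 0 <= x -> (x `^ (d%:R)^-1) ^+ d = x.
Proof.
move=> d_gt0 x0; rewrite -powR_mulrn ?powR_ge0 // -powRrM mulVf ?powRr1 //.
by rewrite pnatr_eq0 -lt0n.
Qed.

Theorem theorem5 (R : realType) (dT : measure_display) (T : measurableType dT)
  (P : probability T R) (d n : nat) (hd : (1 <= d)%N) (hn : (1 <= n)%N)
  (m : {ffun 'I_d.+1 -> 'I_n} -> R) (hm : exists j, m j != 0)
  (X : 'I_d -> T -> 'M[R]_n)
  (hX : forall k i j, measurable_fun setT (fun w => X k w i j))
  (f : R -> R) (hf : Bc f)
  (htail : forall (u : R) (k : 'I_d) (i j : 'I_n), 0 <= u ->
     (P [set w | (u <= `|X k w i j|)%R] <= (f u)%:E)%E) :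
  forall t : R, 0 <= t ->
    (P [set w | (t <= `|\tr (schur_mult m (fun k => X k w))|)%R]
      <= ((d * n ^ 2)%:R * f (t `^ (d%:R)^-1 / (array_norm1 m) `^ (d%:R)^-1))%:E)%E.
Proof.
move=> t t0; have m_gt0 := array_norm1_gt0 hm.
set s := _ / _.
have s0 : 0 <= s by rewrite divr_ge0 ?powR_ge0.
have ts : t = array_norm1 m * s ^+ d.
  rewrite exprMn exprVn !powR_natrVK ?(ltW m_gt0) //.
  by rewrite mulrC divfK ?gt_eqF.
pose E (x : 'I_d * 'I_n * 'I_n) := [set w | s <= `|X x.1.1 w x.1.2 x.2|].
apply: (@le_trans _ _ (\sum_x P (E x))).
  apply: content_le_sum_cover => [||w /=].
  - exact/measurable_norm_ge/measurable_mxtrace_schur_mult.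
  - by move=> x; exact/measurable_norm_ge/hX.
  rewrite ts => /mxtrace_schur_mult_large_entry[] // k [i [j sX]].
  by exists (k, i, j).
apply: (@le_trans _ _ (\sum_(x : 'I_d * 'I_n * 'I_n) (f s)%:E)).
  by apply: lee_sum => -[[k i] j] _; exact: htail.
by rewrite sumEFin sumr_const !card_prod !card_ord mulr_natl expnS expn1 mulnA.
Qed.
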